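(* Let $G_1^o,G_2^o$ be ordered abelian groups and $H_1,H_2$ abelian groups endowed with valuational quasi-orders. Then $G_1^o\boxtimes H_1\equiv G_2^o\boxtimes H_2$ if and only if $G_1^o\equiv G_2^o$ and $H_1\equiv H_2$, where elementary equivalence is in the language $\{0,+,-,\precsim\}$.
   Context: A quasi-order $\precsim$ on an abelian group $H$ is valuational if $a\precsim b\Leftrightarrow w(b)\le w(a)$ for some valuation $w$ on $H$ (a map $w:H\to\Delta\cup\{\infty\}$, $\Delta$ totally ordered, with $w(a)=\infty\Leftrightarrow a=0$, $w(a+b)\ge\min(w(a),w(b))$, $w(-a)=w(a)$). For an ordered abelian group $(A,\le)$ and an abelian group $H$ with a valuational quasi-order $\precsim_H$, the compatible product $A\boxtimes H$ is the group $A\times H$ with the quasi-order $(a,h)\precsim(a',h')\Leftrightarrow(h=h'=0\wedge a\le a')\vee(h'\neq0\wedge h\precsim_H h')$. An ordered group is viewed as an $\{0,+,-,\precsim\}$-structure with $\precsim$ interpreted as its order, a valuationally quasi-ordered group with $\precsim$ interpreted as its quasi-order; $-$ is unary negation. *)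

From HB Require Import structures.
From mathcomp Require Import all_boot all_order all_algebra.
Set Implicit Arguments. Unset Strict Implicit. Unset Printing Implicit Defensive.
Import Order.TTheory GRing.Theory.
Local Open Scope ring_scope.

Record LStruct := MkLStruct {
  carrier :> Type;
  s_zero : carrier;
  s_add : carrier -> carrier -> carrier;
  s_opp : carrier -> carrier;
  s_rel : carrier -> carrier -> Prop }.

Inductive term : Type :=
  | tvar : nat -> term
  | tzero : term
  | tadd : term -> term -> term
  | topp : term -> term.

Inductive formula : Type :=
  | ffalse : formula
  | feq : term -> term -> formula
  | frel : term -> term -> formula
  | fnot : formula -> formula
  | fand : formula -> formula -> formula
  | for_ : formula -> formula -> formula
  | fimp : formula -> formula -> formula
  | fall : nat -> formula -> formula
  | fex : nat -> formula -> formula.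

Fixpoint teval (M : LStruct) (e : nat -> M) (t : term) : M :=
  match t with
  | tvar i => e i
  | tzero => s_zero M
  | tadd t1 t2 => s_add (teval e t1) (teval e t2)
  | topp t1 => s_opp (teval e t1)
  end.

Definition upd (M : LStruct) (e : nat -> M) (i : nat) (x : M) : nat -> M :=
  fun j => if j == i then x else e j.

Fixpoint sat (M : LStruct) (e : nat -> M) (f : formula) : Prop :=
  match f with
  | ffalse => False
  | feq t1 t2 => @teval M e t1 = @teval M e t2
  | frel t1 t2 => @s_rel M (@teval M e t1) (@teval M e t2)
  | fnot g => ~ @sat M e g
  | fand g h => @sat M e g /\ @sat M e h
  | for_ g h => @sat M e g \/ @sat M e h
  | fimp g h => @sat M e g -> @sat M e h
  | fall i g => forall x : M, @sat M (upd e i x) g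
  | fex i g => exists x : M, @sat M (upd e i x) g
  end.

Fixpoint tfree (i : nat) (t : term) : bool :=
  match t with
  | tvar j => j == i
  | tzero => false
  | tadd t1 t2 => tfree i t1 || tfree i t2
  | topp t1 => tfree i t1
  end.

Fixpoint ffree (i : nat) (f : formula) : bool :=
  match f with
  | ffalse => false
  | feq t1 t2 | frel t1 t2 => tfree i t1 || tfree i t2
  | fnot g => ffree i g
  | fand g h | for_ g h | fimp g h => ffree i g || ffree i h
  | fall j g | fex j g => (i != j) && ffree i g
  end.

Definition sentence (f : formula) : Prop := forall i, ~~ ffree i f.

(** Truth of a sentence (the environment is irrelevant for sentences;
    we use the constant-zero environment). *)
Definition models (M : LStruct) (f : formula) : Prop := @sat M (fun _ => s_zero M) f.

Definition elem_equiv (M N : LStruct) : Prop :=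
  forall f, sentence f -> (models M f <-> models N f).

Definition ordered_group (G : zmodType) (le : G -> G -> Prop) : Prop :=
  [/\ (forall a, le a a),
      (forall a b, le a b -> le b a -> a = b),
      (forall a b c, le a b -> le b c -> le a c),
      (forall a b, le a b \/ le b a)
    & (forall a b c, le a b -> le (a + c) (b + c))].

(** * Valuations and valuational quasi-orders.
    A valuation takes values in Δ ∪ {∞}, encoded as [option Δ] with [None = ∞]. *)
Definition le_inf (d : Order.disp_t) (D : orderType d) (x y : option D) : bool :=
  match x, y with
  | _, None => true
  | None, Some _ => false
  | Some a, Some b => (a <= b)%O
  end.

Definition is_valuation (H : zmodType) (d : Order.disp_t) (D : orderType d)
    (w : H -> option D) : Prop :=
  [/\ (forall a, w a = None <-> a = 0),
      (forall a b, le_inf (w a) (w (a + b)) || le_inf (w b) (w (a + b)))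
    & (forall a, w (- a) = w a)].

Definition valuational (H : zmodType) (qo : H -> H -> Prop) : Prop :=
  exists (d : Order.disp_t) (D : orderType d) (w : H -> option D),
    is_valuation w /\ (forall a b, qo a b <-> le_inf (w b) (w a)).

Definition grp_struct (G : zmodType) (r : G -> G -> Prop) : LStruct :=
  @MkLStruct G 0 (fun a b => a + b) (fun a => - a) r.

Definition boxtimes_rel (A H : zmodType) (le : A -> A -> Prop) (qo : H -> H -> Prop)
    (x y : A * H) : Prop :=
  (x.2 = 0 /\ y.2 = 0 /\ le x.1 y.1) \/ (y.2 <> 0 /\ qo x.2 y.2).

Definition boxtimes (A H : zmodType) (le : A -> A -> Prop) (qo : H -> H -> Prop)
    : LStruct :=
  @MkLStruct (A * H)%type (0, 0)
    (fun x y => (x.1 + y.1, x.2 + y.2)) (fun x => (- x.1, - x.2))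
    (boxtimes_rel le qo).

From Pilot Require Import Defs.
From mathcomp Require Import all_boot all_order all_algebra.
From Stdlib Require Import Classical.
(* Re-imported so that [frel] is the formula constructor rather than eqtype's [frel]. *)
Import Pilot.Defs.
Set Implicit Arguments. Unset Strict Implicit. Unset Printing Implicit Defensive.
Import GRing.Theory.
Local Open Scope ring_scope.

(* The quasi-order of A ⊠ H is a boolean combination of componentwise atomic
   conditions, so (Feferman–Vaught) every formula over A ⊠ H is equivalent to a
   finite disjunction of conjunctions φ_A ∧ ψ_H with φ_A evaluated in A and ψ_H
   in H, sentences going to sentences; hence A ≡ A' and H ≡ H' give
   A ⊠ H ≡ A' ⊠ H'.  Conversely both factors are interpretable in A ⊠ H,
   uniformly: A as the subgroup A × 0 = {x | x ≾ 0 ∨ -x ≾ 0} (totality and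
   translation invariance of ≤), and H as the quotient by that subgroup, since
   h ≾ 0 forces w(h) = ∞, i.e. h = 0. *)

Lemma teval_eq_env (M : LStruct) (e e' : nat -> M) t :
  e =1 e' -> teval e t = teval e' t.
Proof. by move=> ee'; elim: t => //= [t1 -> t2 -> | t1 ->]. Qed.

Lemma upd_at (M : LStruct) (e : nat -> M) i x : upd e i x i = x.
Proof. by rewrite /upd eqxx. Qed.

Lemma eq_upd (M : LStruct) (e e' : nat -> M) i x : e =1 e' -> upd e i x =1 upd e' i x.
Proof. by move=> ee' j; rewrite /upd; case: (j == i). Qed.

Lemma upd_map (M N : LStruct) (f : M -> N) (e : nat -> M) i x :
  f \o upd e i x =1 upd (f \o e) i (f x).
Proof. by move=> j; rewrite /upd /=; case: (j == i). Qed.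

Lemma sat_eq_env (M : LStruct) f (e e' : nat -> M) :
  e =1 e' -> sat e f <-> sat e' f.
Proof.
elim: f e e' => //= [t1 t2|t1 t2|g IH|g IHg h IHh|g IHg h IHh|g IHg h IHh|i g IH|i g IH]
  e e' ee'; rewrite ?(teval_eq_env _ ee') ?(IH _ _ ee') ?(IHg _ _ ee') ?(IHh _ _ ee') //.
- by split=> sg x; [apply/(IH _ _ (eq_upd i x ee')) | apply/(IH _ _ (eq_upd i x ee'))].
- by split=> -[x /(IH _ _ (eq_upd i x ee')) sg]; exists x.
Qed.

Definition ftrue : formula := fnot ffalse.

Fixpoint pconj (L1 L2 : seq (formula * formula)) : seq (formula * formula) :=
  if L1 is p :: L1' then [seq (fand p.1 q.1, fand p.2 q.2) | q <- L2] ++ pconj L1' L2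
  else [::].

Fixpoint pneg (L : seq (formula * formula)) : seq (formula * formula) :=
  if L is p :: L' then pconj [:: (fnot p.1, ftrue); (ftrue, fnot p.2)] (pneg L')
  else [:: (ftrue, ftrue)].

Definition pexists i (L : seq (formula * formula)) : seq (formula * formula) :=
  [seq (fex i p.1, fex i p.2) | p <- L].

Fixpoint decomp (f : formula) : seq (formula * formula) :=
  match f with
  | ffalse => [::]
  | feq t1 t2 => [:: (feq t1 t2, feq t1 t2)]
  | frel t1 t2 => [:: (frel t1 t2, fand (feq t1 tzero) (feq t2 tzero));
                     (ftrue, fand (fnot (feq t2 tzero)) (frel t1 t2))]
  | fnot g => pneg (decomp g)
  | fand g h => pconj (decomp g) (decomp h)
  | for_ g h => decomp g ++ decomp h
  | fimp g h => pneg (decomp g) ++ decomp h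
  | fall i g => pneg (pexists i (pneg (decomp g)))
  | fex i g => pexists i (decomp g)
  end.

Definition pclosed i (L : seq (formula * formula)) : bool :=
  all (fun p => ~~ ffree i p.1 && ~~ ffree i p.2) L.

Lemma pclosed_cat i L1 L2 : pclosed i (L1 ++ L2) = pclosed i L1 && pclosed i L2.
Proof. exact: all_cat. Qed.

Lemma pconj_closed i L1 L2 : pclosed i L1 -> pclosed i L2 -> pclosed i (pconj L1 L2).
Proof.
move=> + cl2; elim: L1 => //= p L1 IH /andP[/andP[p1 p2] cl1].
rewrite pclosed_cat IH // andbT /pclosed all_map.
by apply: sub_all cl2 => q /andP[q1 q2] /=; rewrite !negb_or p1 p2 q1 q2.
Qed.

Lemma pneg_closed i L : pclosed i L -> pclosed i (pneg L).
Proof.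
elim: L => // p L IH /andP[/andP[p1 p2] cl].
by apply: pconj_closed; [rewrite /pclosed /= p1 p2 | exact: IH].
Qed.

Lemma pexists_closed i j L : (i == j) || pclosed i L -> pclosed i (pexists j L).
Proof.
case/orP=> [/eqP <-|cl]; first by elim: L => //= p L ->; rewrite !eqxx.
rewrite /pclosed all_map; apply: sub_all cl => p /andP[p1 p2] /=.
by rewrite (negbTE p1) (negbTE p2) !andbF.
Qed.

Lemma decomp_closed i f : ~~ ffree i f -> pclosed i (decomp f).
Proof.
elim: f => //= [t1 t2|t1 t2|g IH|g IHg h IHh|g IHg h IHh|g IHg h IHh|j g IH|j g IH];
  try by case/norP=> n1 n2; rewrite /pclosed /= (negbTE n1) (negbTE n2).
- by move/IH/pneg_closed.
- by case/norP=> /IHg cg /IHh ch; apply: pconj_closed.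
- by case/norP=> /IHg cg /IHh ch; rewrite pclosed_cat cg ch.
- by case/norP=> /IHg/pneg_closed cg /IHh ch; rewrite pclosed_cat cg ch.
- rewrite negb_and negbK => nf; apply/pneg_closed/pexists_closed.
  by case/orP: nf => [-> //|/IH/pneg_closed ->]; rewrite orbT.
- rewrite negb_and negbK => nf; apply: pexists_closed.
  by case/orP: nf => [-> //|/IH ->]; rewrite orbT.
Qed.

Section PairSatisfaction.
Variables M N : LStruct.

Fixpoint psat (eM : nat -> M) (eN : nat -> N) (L : seq (formula * formula)) : Prop :=
  if L is p :: L' then (sat eM p.1 /\ sat eN p.2) \/ psat eM eN L' else False.

Lemma psat_cat eM eN L1 L2 : psat eM eN (L1 ++ L2) <-> psat eM eN L1 \/ psat eM eN L2.
Proof. by elim: L1 => /= [|p L1 ->]; tauto. Qed.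

Lemma psat_pconj eM eN L1 L2 :
  psat eM eN (pconj L1 L2) <-> psat eM eN L1 /\ psat eM eN L2.
Proof.
have psat_and p L : psat eM eN [seq (fand p.1 q.1, fand p.2 q.2) | q <- L] <->
    (sat eM p.1 /\ sat eN p.2) /\ psat eM eN L.
  by elim: L => /= [|q L ->]; tauto.
by elim: L1 => /= [|p L1 IH]; [tauto | rewrite psat_cat psat_and IH; tauto].
Qed.

Lemma psat_pneg eM eN L : psat eM eN (pneg L) <-> ~ psat eM eN L.
Proof.
elim: L => [|p L IH]; first by rewrite /=; tauto.
rewrite -[pneg _]/(pconj _ (pneg L)) psat_pconj IH /=.
by case: (classic (sat eM p.1)); case: (classic (sat eN p.2)); tauto.
Qed.

Lemma psat_pexists eM eN i L :
  psat eM eN (pexists i L) <-> exists x y, psat (upd eM i x) (upd eN i y) L.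
Proof.
elim: L => /= [|p L ->]; first by split=> // -[x [y []]].
split.
- case=> [[[x sx] [y sy]] | [x [y s]]]; exists x, y; tauto.
- case=> x [y [[sx sy]|s]]; [left; split; [exists x|exists y]|right; exists x, y]; tauto.
Qed.

Lemma psat_eq_env eM eM' eN eN' L :
  eM =1 eM' -> eN =1 eN' -> psat eM eN L <-> psat eM' eN' L.
Proof.
move=> eqM eqN; elim: L => /= [|p L ->]; first tauto.
by rewrite (sat_eq_env _ eqM) (sat_eq_env _ eqN).
Qed.

End PairSatisfaction.

Lemma psat_elem_equiv (M M' N N' : LStruct) L :
  (forall i, pclosed i L) -> elem_equiv M M' -> elem_equiv N N' ->
  psat (fun _ => s_zero M) (fun _ => s_zero N) L <->
  psat (fun _ => s_zero M') (fun _ => s_zero N') L.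
Proof.
move=> cl eqM eqN; elim: L cl => //= p L IH cl.
have [sp1 sp2] : sentence p.1 /\ sentence p.2.
  by split=> i; have /andP[/andP[]] := cl i.
rewrite IH; last by move=> i; have /andP[] := cl i.
by have := eqM _ sp1; have := eqN _ sp2; rewrite /models; tauto.
Qed.

Section CompatibleProduct.
Variables (A H : zmodType) (le : A -> A -> Prop) (qo : H -> H -> Prop).
Notation P := (boxtimes le qo).
Notation GA := (grp_struct le).
Notation GH := (grp_struct qo).

Lemma teval_boxtimes (e : nat -> P) t :
  teval e t = (@teval GA (fst \o e) t, @teval GH (snd \o e) t).
Proof. by elim: t => /= [i|//|t1 -> t2 ->|t1 ->] //; case: (e i). Qed.

Lemma psat_upd_boxtimes (e : nat -> P) i (x : P) L :
  @psat GA GH (fst \o upd e i x) (snd \o upd e i x) L <->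
  psat (upd (fst \o e : nat -> GA) i x.1) (upd (snd \o e : nat -> GH) i x.2) L.
Proof. exact: psat_eq_env (upd_map _ _ _ _) (upd_map _ _ _ _). Qed.

Lemma sat_upd_fst (e : nat -> P) i (x : P) f :
  @sat GA (fst \o upd e i x) f <-> sat (upd (fst \o e : nat -> GA) i x.1) f.
Proof. exact: sat_eq_env (upd_map _ _ _ _). Qed.

Lemma sat_upd_snd (e : nat -> P) i (x : P) f :
  @sat GH (snd \o upd e i x) f <-> sat (upd (snd \o e : nat -> GH) i x.2) f.
Proof. exact: sat_eq_env (upd_map _ _ _ _). Qed.

Lemma sat_boxtimes_decomp f (e : nat -> P) :
  sat e f <-> @psat GA GH (fst \o e) (snd \o e) (decomp f).
Proof.
elim: f e => /= [e|t1 t2 e|t1 t2 e|g IH e|g IHg h IHh e|g IHg h IHh e|g IHg h IHh e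
  |i g IH e|i g IH e]; rewrite ?teval_boxtimes ?psat_cat ?psat_pneg ?psat_pconj
  ?psat_pexists ?IH ?IHg ?IHh; try tauto.
- by split=> [[-> ->]|[[-> ->]|]]; tauto.
- rewrite /boxtimes_rel /=; tauto.
- split=> [all_g [x [y]]|no_xy x].
    by rewrite psat_pneg; have := all_g (x, y); rewrite IH psat_upd_boxtimes.
  rewrite IH psat_upd_boxtimes; apply: NNPP => ng; apply: no_xy.
  by exists x.1, x.2; rewrite psat_pneg.
- split=> [[x]|[x [y]]].
    by rewrite IH psat_upd_boxtimes; exists x.1, x.2.
  by exists (x, y); rewrite IH psat_upd_boxtimes.
Qed.

End CompatibleProduct.

Lemma elem_equiv_boxtimes (A A' H H' : zmodType)
    (le : A -> A -> Prop) (le' : A' -> A' -> Prop)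
    (qo : H -> H -> Prop) (qo' : H' -> H' -> Prop) :
  elem_equiv (grp_struct le) (grp_struct le') ->
  elem_equiv (grp_struct qo) (grp_struct qo') ->
  elem_equiv (boxtimes le qo) (boxtimes le' qo').
Proof.
move=> eqA eqH f sf; rewrite /models !sat_boxtimes_decomp.
by apply: psat_elem_equiv => // i; apply: decomp_closed.
Qed.

Lemma teval_grp_zero (G : zmodType) (r : G -> G -> Prop) (e : nat -> grp_struct r) t :
  e =1 (fun=> 0) -> teval e t = 0.
Proof. by move=> e0; elim: t => /= [i|//|t1 -> t2 ->|t1 ->]; rewrite ?e0 ?addr0 ?oppr0. Qed.

Lemma valuational_le0 (H : zmodType) (qo : H -> H -> Prop) h :
  valuational qo -> qo h 0 <-> h = 0.
Proof.
case=> d [D [w [[w_inf _ _] qo_w]]].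
by rewrite qo_w (proj2 (w_inf 0) erefl) -w_inf; case: (w h).
Qed.

Definition fst_axis (t : term) : formula := for_ (frel t tzero) (frel (topp t) tzero).

Fixpoint fst_interp (f : formula) : formula :=
  match f with
  | ffalse => ffalse
  | feq t1 t2 => feq t1 t2
  | frel t1 t2 => frel t1 t2
  | fnot g => fnot (fst_interp g)
  | fand g h => fand (fst_interp g) (fst_interp h)
  | for_ g h => for_ (fst_interp g) (fst_interp h)
  | fimp g h => fimp (fst_interp g) (fst_interp h)
  | fall i g => fall i (fimp (fst_axis (tvar i)) (fst_interp g))
  | fex i g => fex i (fand (fst_axis (tvar i)) (fst_interp g))
  end.

Fixpoint snd_interp (f : formula) : formula :=
  match f with
  | ffalse => ffalse
  | feq t1 t2 => fst_axis (tadd t1 (topp t2))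
  | frel t1 t2 => for_ (fand (fst_axis t2) (fst_axis t1))
                       (fand (fnot (fst_axis t2)) (frel t1 t2))
  | fnot g => fnot (snd_interp g)
  | fand g h => fand (snd_interp g) (snd_interp h)
  | for_ g h => for_ (snd_interp g) (snd_interp h)
  | fimp g h => fimp (snd_interp g) (snd_interp h)
  | fall i g => fall i (snd_interp g)
  | fex i g => fex i (snd_interp g)
  end.

Lemma fst_interp_free i f : ~~ ffree i f -> ~~ ffree i (fst_interp f).
Proof.
elim: f => //= [g IHg h IHh|g IHg h IHh|g IHg h IHh|j g IH|j g IH];
  try by case/norP=> /IHg ng /IHh nh; apply/norP.
all: have [<-|ne] := eqVneq j i; rewrite /fst_axis //= (negbTE ne) /=; exact: IH.
Qed.

Lemma snd_interp_free i f : ~~ ffree i f -> ~~ ffree i (snd_interp f).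
Proof.
elim: f => //= [t1 t2|t1 t2|g IHg h IHh|g IHg h IHh|g IHg h IHh|j g IH|j g IH];
  rewrite /fst_axis /=; try by case/norP=> /negbTE-> /negbTE->.
1-3: by case/norP=> /IHg ng /IHh nh; apply/norP.
all: by case: (i != j) => //= /IH.
Qed.

Section Interpretations.
Variables (A H : zmodType) (le : A -> A -> Prop) (qo : H -> H -> Prop).
Hypothesis le_ordered : ordered_group le.
Notation P := (boxtimes le qo).
Notation GA := (grp_struct le).
Notation GH := (grp_struct qo).

Lemma fst_axis_rel (x : A * H) :
  boxtimes_rel le qo x (0, 0) \/ boxtimes_rel le qo (- x.1, - x.2) (0, 0) <-> x.2 = 0.
Proof.
rewrite /boxtimes_rel /=; case: x => a h /=.
split=> [[[[h0 _]|[]]|[[/eqP]|[]]] // | ->]; first by rewrite oppr_eq0 => /eqP.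
have [_ _ _ le_total le_addr] := le_ordered.
have [a_le0|a_ge0] := le_total a 0; [left | right]; left; rewrite ?oppr0; do 2!split=> //.
by have := le_addr _ _ (- a) a_ge0; rewrite add0r subrr.
Qed.

Lemma upd_snd0 (e : nat -> P) i (x : P) :
  snd \o e =1 (fun=> 0) -> x.2 = 0 -> snd \o upd e i x =1 (fun=> 0).
Proof. by move=> e0 x0 j; rewrite /upd /=; case: (j == i); [|exact: e0]. Qed.

Lemma sat_fst_interp f (e : nat -> P) :
  snd \o e =1 (fun=> 0) -> sat e (fst_interp f) <-> @sat GA (fst \o e) f.
Proof.
elim: f e => /= [//|t1 t2|t1 t2|g IH|g IHg h IHh|g IHg h IHh|g IHg h IHh|i g IH|i g IH]
  e e0; rewrite ?teval_boxtimes ?(teval_grp_zero _ e0) ?IH ?IHg ?IHh //.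
- by split=> [[]|->].
- by rewrite /boxtimes_rel /=; tauto.
- split=> [all_x a|all_a x].
    have := all_x (a, 0); rewrite upd_at fst_axis_rel => /(_ erefl).
    by rewrite IH ?sat_upd_fst //; apply: upd_snd0.
  rewrite upd_at fst_axis_rel => x0.
  by rewrite IH ?sat_upd_fst //; apply: upd_snd0.
- split=> [[x []]|[a]].
    rewrite upd_at fst_axis_rel => x0.
    by rewrite IH ?sat_upd_fst; [exists x.1 | apply: upd_snd0].
  by exists (a, 0); rewrite upd_at fst_axis_rel IH ?sat_upd_fst //; apply: upd_snd0.
Qed.

Hypothesis qo_valuational : valuational qo.

Lemma sat_snd_interp f (e : nat -> P) : sat e (snd_interp f) <-> @sat GH (snd \o e) f.
Proof.
elim: f e => /= [//|t1 t2|t1 t2|g IH|g IHg h IHh|g IHg h IHh|g IHg h IHh|i g IH|i g IH]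
  e; rewrite ?fst_axis_rel ?teval_boxtimes /= ?IH ?IHg ?IHh //.
- by split=> [/eqP|->]; [rewrite subr_eq0 => /eqP | rewrite subrr].
- rewrite /boxtimes_rel /=.
  have [->|nz] := eqVneq (@teval GH (snd \o e) t2) 0.
    by rewrite valuational_le0 //; tauto.
  by have := elimN eqP nz; tauto.
- split=> [all_x h|all_h x]; first by have := all_x (0, h); rewrite IH sat_upd_snd.
  by rewrite IH sat_upd_snd.
- split=> [[x]|[h]]; first by rewrite IH sat_upd_snd; exists x.2.
  by exists (0, h); rewrite IH sat_upd_snd.
Qed.

End Interpretations.

Lemma elem_equiv_boxtimes_fst (A A' H H' : zmodType)
    (le : A -> A -> Prop) (le' : A' -> A' -> Prop)
    (qo : H -> H -> Prop) (qo' : H' -> H' -> Prop) :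
  ordered_group le -> ordered_group le' ->
  elem_equiv (boxtimes le qo) (boxtimes le' qo') ->
  elem_equiv (grp_struct le) (grp_struct le').
Proof.
move=> ord ord' eq_prod f sf; have := eq_prod (fst_interp f) (fun i => fst_interp_free (sf i)).
by rewrite /models !sat_fst_interp.
Qed.

Lemma elem_equiv_boxtimes_snd (A A' H H' : zmodType)
    (le : A -> A -> Prop) (le' : A' -> A' -> Prop)
    (qo : H -> H -> Prop) (qo' : H' -> H' -> Prop) :
  ordered_group le -> ordered_group le' -> valuational qo -> valuational qo' ->
  elem_equiv (boxtimes le qo) (boxtimes le' qo') ->
  elem_equiv (grp_struct qo) (grp_struct qo').
Proof.
move=> ord ord' val val' eq_prod f sf.
have := eq_prod (snd_interp f) (fun i => snd_interp_free (sf i)).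
by rewrite /models !sat_snd_interp.
Qed.

Theorem mainTheorem17 (G1 G2 H1 H2 : zmodType)
    (le1 : G1 -> G1 -> Prop) (le2 : G2 -> G2 -> Prop)
    (qo1 : H1 -> H1 -> Prop) (qo2 : H2 -> H2 -> Prop) :
  ordered_group le1 -> ordered_group le2 ->
  valuational qo1 -> valuational qo2 ->
  (elem_equiv (boxtimes le1 qo1) (boxtimes le2 qo2) <->
   elem_equiv (grp_struct le1) (grp_struct le2) /\
   elem_equiv (grp_struct qo1) (grp_struct qo2)).
Proof.
move=> ord1 ord2 val1 val2; split=> [eq_prod | [eqG eqH]]; last exact: elem_equiv_boxtimes.
split; [exact: elem_equiv_boxtimes_fst eq_prod | exact: elem_equiv_boxtimes_snd eq_prod].
Qed.
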